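(* Let $\Omega$ be a convex subset of $M_{n\times n}(\mathbb{C})$ and let $\Omega_s$ be the set of all nonsingular matrices in $\Omega$ that have $n$ distinct eigenvalues. If the closure $\overline{\Omega}$ contains at least one nonsingular matrix with $n$ distinct eigenvalues, then $\Omega_s$ is dense in $\Omega$.
   Context: $M_{n\times n}(\mathbb{C})$ denotes the set of $n\times n$ complex matrices, equipped with the topology induced by the Frobenius norm $\|A\|_F=(\sum_{i,j}|a_{ij}|^2)^{1/2}$. *)

From mathcomp Require Import all_boot all_order all_algebra.
From mathcomp Require Import reals.
From mathcomp.real_closed Require Export complex.
Set Implicit Arguments. Unset Strict Implicit. Unset Printing Implicit Defensive.
Import Order.TTheory GRing.Theory Num.Theory.
Local Open Scope ring_scope.
Local Open Scope complex_scope.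

Section Defs.
Variables (R : realType) (n : nat).
Local Notation M := 'M[R[i]]_n.

Definition frob_norm (A : M) : R :=
  Num.sqrt (\sum_(i < n) \sum_(j < n) (ComplexField.Normc.normc (A i j)) ^+ 2).

Definition convex_mx (Om : M -> Prop) : Prop :=
  forall A B : M, Om A -> Om B -> forall t : R, 0 <= t <= 1 ->
    Om (t%:C *: A + (1 - t)%:C *: B).

Definition closure_mx (Om : M -> Prop) : M -> Prop :=
  fun A => forall e : R, 0 < e -> exists B : M, Om B /\ frob_norm (A - B) < e.

Definition distinct_eigs (A : M) : Prop :=
  exists s : seq R[i], [/\ uniq s, size s = n & all (eigenvalue A) s].

Definition Omega_s (Om : M -> Prop) : M -> Prop :=
  fun A => [/\ Om A, A \in unitmx & distinct_eigs A].

Definition dense_in (S Om : M -> Prop) : Prop :=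
  forall A : M, Om A -> forall e : R, 0 < e ->
    exists B : M, S B /\ frob_norm (A - B) < e.
End Defs.

From mathcomp Require Import all_boot all_order all_algebra all_field.
From mathcomp Require Import reals.
From mathcomp.real_closed Require Import complex.
Set Implicit Arguments. Unset Strict Implicit. Unset Printing Implicit Defensive.
Import Order.TTheory GRing.Theory Num.Theory.
Local Open Scope ring_scope.
Local Open Scope complex_scope.

(* [det_disc B = det B * resultant (char_poly B) (char_poly B)^`()] vanishes exactly
   when [B] is singular or has a repeated eigenvalue, and it is a polynomial in the
   entries of [B], hence Lipschitz near the good matrix [A0] of the closure: some [B]
   in [Om] close to [A0] is good. For [A] in [Om], [t |-> det_disc (t B + (1 - t) A)]
   is a polynomial that does not vanish at [t = 1], so some small [t > 0] avoids its
   roots; by convexity [t B + (1 - t) A] is then a good point of [Om] at distance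
   [t ||A - B||] from [A]. *)

Section PointwiseClosure.
Variables (T : Type) (R : comNzRingType) (P : (T -> R) -> Prop).
Hypothesis P_ext : forall f g, f =1 g -> P f -> P g.
Arguments P_ext {f g}.
Hypothesis P_cst : forall c, P (fun=> c).
Hypothesis P_add : forall f g, P f -> P g -> P (fun y => f y + g y).
Hypothesis P_mul : forall f g, P f -> P g -> P (fun y => f y * g y).

Let pointwise_big (op : R -> R -> R) idx :
    (forall f g, P f -> P g -> P (fun y => op (f y) (g y))) ->
  forall (I : Type) (r : seq I) (Q : pred I) (F : I -> T -> R),
    (forall i, P (F i)) -> P (fun y => \big[op/idx]_(i <- r | Q i) F i y).
Proof.
move=> P_op I r Q F PF; elim: r => [|x r IHr].
  by apply: P_ext _ (P_cst idx) => y; rewrite big_nil.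
have [Qx|nQx] := boolP (Q x).
  by apply: P_ext _ (P_op _ _ (PF x) IHr) => y; rewrite big_cons Qx.
by apply: P_ext _ IHr => y; rewrite big_cons (negPf nQx).
Qed.

Lemma pointwise_sum_closed (I : Type) (r : seq I) (Q : pred I) F :
  (forall i, P (F i)) -> P (fun y => \sum_(i <- r | Q i) F i y).
Proof. exact: pointwise_big. Qed.

Lemma pointwise_det_closed k (S : T -> 'M[R]_k) :
  (forall i j, P (fun y => S y i j)) -> P (fun y => \det (S y)).
Proof.
move=> PS; apply: pointwise_sum_closed => s.
by apply: P_mul; [exact: P_cst | apply: pointwise_big => // i; exact: PS].
Qed.

End PointwiseClosure.

Section LipschitzNear.
Variables (F : numFieldType) (T : Type) (x0 : T) (d : T -> F).
Hypothesis d_ge0 : forall y, 0 <= d y.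

Definition lipschitz_near (f : T -> F) :=
  exists2 K : F, 0 <= K & forall y, d y <= 1 -> `|f x0 - f y| <= K * d y.

Lemma eq_lipschitz_near f g : f =1 g -> lipschitz_near f -> lipschitz_near g.
Proof. by move=> fg [K K0 Kf]; exists K => // y; rewrite -!fg; exact: Kf. Qed.

Lemma lipschitz_near_cst c : lipschitz_near (fun=> c).
Proof. by exists 0 => // y _; rewrite subrr normr0 mul0r. Qed.

Lemma lipschitz_nearD f g :
  lipschitz_near f -> lipschitz_near g -> lipschitz_near (fun y => f y + g y).
Proof.
move=> [K1 K1_ge0 K1f] [K2 K2_ge0 K2g]; exists (K1 + K2) => [|y dy1].
  exact: addr_ge0.
rewrite opprD addrACA mulrDl.
exact: le_trans (ler_normD _ _) (lerD (K1f _ dy1) (K2g _ dy1)).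
Qed.

Lemma lipschitz_nearN f : lipschitz_near f -> lipschitz_near (fun y => - f y).
Proof. by move=> [K K_ge0 Kf]; exists K => // y dy1; rewrite -opprD normrN Kf. Qed.

Lemma lipschitz_nearM f g :
  lipschitz_near f -> lipschitz_near g -> lipschitz_near (fun y => f y * g y).
Proof.
move=> [K1 K1_ge0 K1f] [K2 K2_ge0 K2g].
exists (`|f x0| * K2 + K1 * (`|g x0| + K2)) => [|y dy1].
  by rewrite addr_ge0 ?mulr_ge0 ?addr_ge0.
have gy_le : `|g y| <= `|g x0| + K2.
  rewrite -[g y](subKr (g x0)); apply: le_trans (ler_normB _ _) _.
  by rewrite lerD2l; apply: le_trans (K2g _ dy1) _; rewrite ler_piMr.
have -> : f x0 * g x0 - f y * g y = f x0 * (g x0 - g y) + (f x0 - f y) * g y.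
  by rewrite mulrBr mulrBl addrA subrK.
apply: le_trans (ler_normD _ _) _; rewrite !normrM mulrDl.
apply: lerD; first by rewrite -mulrA ler_wpM2l ?K2g.
by rewrite mulrAC ler_pM ?mulr_ge0 ?K1f.
Qed.

Lemma lipschitz_nearMn f k : lipschitz_near f -> lipschitz_near (fun y => f y *+ k).
Proof.
move=> Lf; apply: eq_lipschitz_near (lipschitz_nearM Lf (lipschitz_near_cst k%:R)) => y.
by rewrite mulr_natr.
Qed.

(* The radius [a / (K + 1 + a)] is below [1], so the Lipschitz bound applies,
   and it makes [K * d y < a]. *)
Lemma lipschitz_near_neq0 f : lipschitz_near f -> f x0 != 0 ->
  exists2 r, 0 < r & forall y, d y < r -> f y != 0.
Proof.
move=> [K K_ge0 Kf] fx0_neq0; set a := `|f x0|.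
have a_gt0 : 0 < a by rewrite normr_gt0.
have den_gt0 : 0 < K + 1 + a by rewrite addr_gt0 // ltr_wpDl.
exists (a / (K + 1 + a)) => [|y dy_lt]; first exact: divr_gt0.
have dy_le1 : d y <= 1.
  by apply/ltW/(lt_le_trans dy_lt); rewrite ler_pdivrMr // mul1r lerDr addr_ge0.
have Kdy_lt : K * d y < a.
  apply: (@le_lt_trans _ _ ((K + 1 + a) * d y)).
    by apply: ler_wpM2r => //; rewrite -addrA lerDl addr_ge0 // ltW.
  by rewrite mulrC -ltr_pdivlMr.
by apply: (contraTneq _ (Kf _ dy_le1)) => ->; rewrite subr0 lt_geF.
Qed.

Lemma lipschitz_near_sum (I : Type) (r : seq I) (P : pred I) (f : I -> T -> F) :
  (forall i, lipschitz_near (f i)) ->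
  lipschitz_near (fun y => \sum_(i <- r | P i) f i y).
Proof.
by move=> Lf; apply: (pointwise_sum_closed (@eq_lipschitz_near) lipschitz_near_cst
  (@lipschitz_nearD)).
Qed.

Lemma lipschitz_near_det k (S : T -> 'M[F]_k) :
  (forall i j, lipschitz_near (fun y => S y i j)) -> lipschitz_near (fun y => \det (S y)).
Proof.
by move=> LS; apply: (pointwise_det_closed (@eq_lipschitz_near) lipschitz_near_cst
  (@lipschitz_nearD) (@lipschitz_nearM)).
Qed.

Definition coef_lipschitz_near (p : T -> {poly F}) :=
  forall k, lipschitz_near (fun y => (p y)`_k).

Lemma eq_coef_lipschitz_near p q :
  p =1 q -> coef_lipschitz_near p -> coef_lipschitz_near q.
Proof. by move=> pq Lp k; apply: eq_lipschitz_near (Lp k) => y; rewrite pq. Qed.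

Lemma coef_lipschitz_near_cst c : coef_lipschitz_near (fun=> c).
Proof. by move=> k; exact: lipschitz_near_cst. Qed.

Lemma coef_lipschitz_nearC f :
  lipschitz_near f -> coef_lipschitz_near (fun y => (f y)%:P).
Proof.
move=> Lf [|k]; first by apply: eq_lipschitz_near Lf => y; rewrite coefC.
by apply: eq_lipschitz_near (lipschitz_near_cst 0) => y; rewrite coefC.
Qed.

Lemma coef_lipschitz_nearD p q : coef_lipschitz_near p -> coef_lipschitz_near q ->
  coef_lipschitz_near (fun y => p y + q y).
Proof.
move=> Lp Lq k; apply: eq_lipschitz_near (lipschitz_nearD (Lp k) (Lq k)) => y.
by rewrite coefD.
Qed.

Lemma coef_lipschitz_nearM p q : coef_lipschitz_near p -> coef_lipschitz_near q ->
  coef_lipschitz_near (fun y => p y * q y).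
Proof.
move=> Lp Lq k; apply: eq_lipschitz_near (_ : lipschitz_near
  (fun y => \sum_(j < k.+1) (p y)`_j * (q y)`_(k - j))) => [y|].
  by rewrite coefM.
by apply: lipschitz_near_sum => j; apply: lipschitz_nearM.
Qed.

Lemma coef_lipschitz_near_deriv p :
  coef_lipschitz_near p -> coef_lipschitz_near (fun y => (p y)^`()).
Proof.
move=> Lp k; apply: eq_lipschitz_near (lipschitz_nearMn k.+1 (Lp k.+1)) => y.
by rewrite coef_deriv.
Qed.

Lemma coef_lipschitz_near_det k (S : T -> 'M[{poly F}]_k) :
  (forall i j, coef_lipschitz_near (fun y => S y i j)) ->
  coef_lipschitz_near (fun y => \det (S y)).
Proof.
by move=> LS; apply: (pointwise_det_closed (@eq_coef_lipschitz_near)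
  coef_lipschitz_near_cst (@coef_lipschitz_nearD) (@coef_lipschitz_nearM)).
Qed.

End LipschitzNear.

Section FrobeniusNorm.
Variables (R : realType) (n : nat).
Implicit Types X : 'M[R[i]]_n.

Lemma frob_norm_ge0 X : 0 <= frob_norm X.
Proof. exact: sqrtr_ge0. Qed.

Lemma norm_entry_le_frob_norm X i j : `|X i j| <= (frob_norm X)%:C.
Proof.
have normc_ge0 : 0 <= ComplexField.Normc.normc (X i j).
  by rewrite -ler0c (normr_ge0 (X i j)).
rewrite [`|_|]/= lecR -[leLHS]ger0_norm // -(@sqrtr_sqr R) ler_sqrt; last first.
  by do 2![apply: sumr_ge0 => ? _]; exact: sqr_ge0.
rewrite (bigD1 i) //= (bigD1 j) //= -addrA lerDl.
by apply: addr_ge0; do ?[apply: sumr_ge0 => ? _]; exact: sqr_ge0.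
Qed.

Lemma frob_normZ (c : R) X : 0 <= c -> frob_norm (c%:C *: X) = c * frob_norm X.
Proof.
move=> c_ge0; rewrite /frob_norm -[c in RHS]ger0_norm // -sqrtr_sqr -sqrtrM ?sqr_ge0 //.
congr Num.sqrt; rewrite mulr_sumr; apply: eq_bigr => i _; rewrite mulr_sumr.
apply: eq_bigr => j _; rewrite mxE -exprMn; congr (_ ^+ 2); apply: complexI.
by rewrite rmorphM -[LHS]/`|c%:C * X i j| normrM ger0_norm ?ler0c.
Qed.

End FrobeniusNorm.

Definition det_disc (F : comNzRingType) n (B : 'M[F]_n) : F :=
  \det B * resultant (char_poly B) (char_poly B)^`().
Arguments det_disc {F n}.

Lemma resultant_deriv_neq0 (F : idomainType) (p : {poly F}) :
  p != 0 -> (resultant p p^`() != 0) = separable_poly p.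
Proof.
move=> p_neq0; rewrite resultant_eq0 separable_poly.unlock coprimep_def -leqNgt.
have : gcdp p p^`() != 0 by rewrite gcdp_eq0 negb_and p_neq0.
by rewrite -size_poly_gt0; case: (size _) => [|[|k]].
Qed.

Lemma separable_char_polyP (F : closedFieldType) n (B : 'M[F]_n) :
  reflect (exists s, [/\ uniq s, size s = n & all (eigenvalue B) s])
          (separable_poly (char_poly B)).
Proof.
have [rs] := closed_field_poly_normal (char_poly B).
rewrite (monicP (char_poly_monic B)) scale1r => chiE.
have size_rs : size rs = n.
  by have := size_char_poly B; rewrite chiE size_prod_XsubC => -[].
have eigE a : eigenvalue B a = (a \in rs).
  by rewrite eigenvalue_root_char chiE root_prod_XsubC.
rewrite chiE separable_prod_XsubC; apply: (iffP idP) => [uniq_rs|[s [uniq_s size_s]]].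
  by exists rs; split=> //; apply/allP => a; rewrite eigE.
move=> /allP s_eig; apply: leq_size_uniq uniq_s _ _ => [a /s_eig|].
  by rewrite eigE.
by rewrite size_rs size_s.
Qed.

Lemma det_disc_neq0 (F : closedFieldType) n (B : 'M[F]_n) :
  (det_disc B != 0) = (B \in unitmx) && separable_poly (char_poly B).
Proof.
rewrite /det_disc mulf_eq0 negb_or unitmxE unitfE resultant_deriv_neq0 //.
by rewrite -size_poly_gt0 size_char_poly.
Qed.

Section MonicDeriv.
Variables (R : nzRingType) (p : {poly R}) (k : nat).
Hypotheses (p_monic : p \is monic) (size_p : size p = k.+2).

Lemma coef_deriv_monic : p^`()`_k = k.+1%:R.
Proof. by rewrite coef_deriv -(monicP p_monic) lead_coefE size_p. Qed.

Hypothesis k1_neq0 : k.+1%:R != 0 :> R.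

Lemma size_deriv_monic : size p^`() = k.+1.
Proof.
apply/eqP; rewrite eqn_leq; apply/andP; split.
  by rewrite -ltnS -size_p lt_size_deriv // -size_poly_gt0 size_p.
by rewrite ltnNge; apply: contra k1_neq0 => /(nth_default 0) <-; rewrite coef_deriv_monic.
Qed.

Lemma lead_coef_deriv_monic : lead_coef p^`() = k.+1%:R.
Proof. by rewrite lead_coefE size_deriv_monic coef_deriv_monic. Qed.

End MonicDeriv.

(* [Sylvester_mx p q], with dimensions fixed in advance instead of read off the
   sizes of [p] and [q], so that its entries can be followed along a family of
   polynomials. *)
Definition sized_Sylvester_mx (R : nzRingType) a b (p q : {poly R}) : 'M[R]_(a + b) :=
  \matrix_(i, j) match split i with
                 | inl k => p`_(j - k) *+ (k <= j)%N
                 | inr k => q`_(j - k) *+ (k <= j)%N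
                 end.

Lemma resultant_sized (R : nzRingType) (p q : {poly R}) a b :
  (size q).-1 = a -> (size p).-1 = b -> resultant p q = \det (sized_Sylvester_mx a b p q).
Proof.
by move=> <- <-; congr (\det _); apply/matrixP => i j; rewrite Sylvester_mxE mxE.
Qed.

Lemma det_disc_segment_poly (F : comNzRingType) n (A B : 'M[F]_n.+1) :
  n.+1%:R != 0 :> F ->
  exists Q : {poly F}, forall t, Q.[t] = det_disc (t *: B + (1 - t) *: A).
Proof.
move=> n1_neq0.
pose Z : 'M[{poly F}]_n.+1 := \matrix_(i, j) ('X * (B i j)%:P + (1 - 'X) * (A i j)%:P).
exists (det_disc Z) => t.
have ZtE : map_mx (horner_eval t) Z = t *: B + (1 - t) *: A.
  by apply/matrixP => i j; rewrite !mxE horner_evalE !hornerE.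
have n1_neq0' : n.+1%:R != 0 :> {poly F} by rewrite -polyC_natr polyC_eq0.
rewrite -horner_evalE rmorphM /= -det_map_mx ZtE /det_disc; congr (_ * _).
rewrite map_resultant; first by rewrite -deriv_map map_char_poly ZtE.
  by rewrite (monicP (char_poly_monic Z)) rmorph1 oner_neq0.
by rewrite (lead_coef_deriv_monic (char_poly_monic Z) (size_char_poly Z)) // rmorph_nat.
Qed.

(* The [size Q] points [e / i.+1] cannot all be roots of [Q]. *)
Lemma exists_nonroot_in_interval (F : numFieldType) (Q : {poly F}) (e : F) :
  Q != 0 -> 0 < e -> exists2 t, 0 < t <= e & ~~ root Q t.
Proof.
move=> Q_neq0 e_gt0; pose s := [seq e / i.+1%:R | i <- iota 0 (size Q)].
have uniq_s : uniq s.
  rewrite map_inj_uniq ?iota_uniq // => i j /(mulfI (lt0r_neq0 e_gt0)) /invr_inj.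
  by move/eqP; rewrite eqr_nat => /eqP [].
have /allPn[_ /mapP[i _ ->] nonroot] : ~~ all (root Q) s.
  apply/negP => /(max_poly_roots Q_neq0)/(_ uniq_s).
  by rewrite size_map size_iota ltnn.
exists (e / i.+1%:R) => //.
by rewrite divr_gt0 //= ler_pdivrMr // ler_pMr // ler1n.
Qed.

Lemma gt0_real_complex (R : rcfType) (z : R[i]) :
  0 < z -> exists2 r : R, 0 < r & z = r%:C.
Proof.
move=> z_gt0; have /complex_realP[r z_r] := gtr0_real z_gt0.
by exists r => //; rewrite -ltcR -z_r.
Qed.

Section DetDiscNear.
Variables (R : realType) (n : nat) (A0 : 'M[R[i]]_n.+1).
Let dist (B : 'M[R[i]]_n.+1) := (frob_norm (A0 - B))%:C.

Let dist_ge0 B : 0 <= dist B.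
Proof. by rewrite ler0c frob_norm_ge0. Qed.

Lemma lipschitz_near_entry i j : lipschitz_near A0 dist (fun B => B i j).
Proof.
exists 1 => // B _; rewrite mul1r.
by have := norm_entry_le_frob_norm (A0 - B) i j; rewrite !mxE.
Qed.

Lemma coef_lipschitz_near_char_poly : coef_lipschitz_near A0 dist char_poly.
Proof.
apply: coef_lipschitz_near_det => // i j.
have LX : coef_lipschitz_near A0 dist (fun=> 'X *+ (i == j)).
  exact: coef_lipschitz_near_cst.
have LN := coef_lipschitz_nearC (lipschitz_nearN (lipschitz_near_entry i j)).
by apply: eq_coef_lipschitz_near (coef_lipschitz_nearD LX LN) => B; rewrite !mxE polyCN.
Qed.

Lemma lipschitz_near_det_disc : lipschitz_near A0 dist det_disc.
Proof.
have n1_neq0 : n.+1%:R != 0 :> R[i] by rewrite pnatr_eq0.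
have discE (B : 'M[R[i]]_n.+1) : det_disc B = \det B *
    \det (sized_Sylvester_mx n n.+1 (char_poly B) (char_poly B)^`()).
  rewrite /det_disc (resultant_sized (a := n) (b := n.+1)) ?size_char_poly //.
  by rewrite (size_deriv_monic (char_poly_monic B) (size_char_poly B)).
apply: eq_lipschitz_near (fun B => esym (discE B)) _.
apply: lipschitz_nearM => //; apply: lipschitz_near_det => // i j.
  exact: lipschitz_near_entry.
have coef_char' := coef_lipschitz_near_deriv coef_lipschitz_near_char_poly.
case split_i: (split i) => [l|l];
  [move: (coef_lipschitz_near_char_poly (j - l)%N) | move: (coef_char' (j - l)%N)] => L;
  apply: eq_lipschitz_near (lipschitz_nearMn (l <= j)%N L) => B;
  by rewrite mxE split_i.
Qed.

Lemma det_disc_neq0_near : det_disc A0 != 0 ->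
  exists2 r : R, 0 < r & forall B, frob_norm (A0 - B) < r -> det_disc B != 0.
Proof.
move=> /(lipschitz_near_neq0 dist_ge0 lipschitz_near_det_disc).
case=> _ /gt0_real_complex[r r_gt0 ->] near_A0.
by exists r => // B; rewrite -ltcR; exact: near_A0.
Qed.

End DetDiscNear.

Lemma subr_segment (R : pzRingType) (V : lmodType R) (a b : V) t :
  a - (t *: b + (1 - t) *: a) = t *: (a - b).
Proof. by rewrite scalerBl scale1r scalerBr addrCA opprD addrA subrr add0r opprB. Qed.

Lemma det_disc_neq0_on_segment (R : realType) n (A B : 'M[R[i]]_n.+1) (e : R) :
  det_disc B != 0 -> 0 < e ->
  exists2 t : R, 0 < t <= e & det_disc (t%:C *: B + (1 - t)%:C *: A) != 0.
Proof.
move=> B_neq0 e_gt0.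
have n1_neq0 : n.+1%:R != 0 :> R[i] by rewrite pnatr_eq0.
have [Q QE] := det_disc_segment_poly A B n1_neq0.
have Q_neq0 : Q != 0.
  apply: contraNneq B_neq0 => Q0; have := QE 1.
  by rewrite Q0 horner0 subrr scale0r addr0 scale1r => <-.
have eC_gt0 : 0 < e%:C by rewrite ltcR.
have [z /andP[z_gt0 z_le] nonroot] := exists_nonroot_in_interval Q_neq0 eC_gt0.
have [t t_gt0 z_t] := gt0_real_complex z_gt0.
exists t; first by rewrite t_gt0 -lecR -z_t.
have -> : (1 - t)%:C = 1 - z by rewrite z_t rmorphB rmorph1.
by rewrite -z_t -QE; exact: nonroot.
Qed.

Unset Implicit Arguments.
Theorem theorem3p6 (R : realType) (n : nat) (Om : 'M[R[i]]_n -> Prop) :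
  convex_mx Om ->
  (exists A : 'M[R[i]]_n, closure_mx Om A /\ A \in unitmx /\ distinct_eigs A) ->
  dense_in (Omega_s Om) Om.
Proof.
case: n Om => [|n] Om convOm [A0 [A0_cl [A0_unit A0_eigs]]] A OmA e e_gt0.
  exists A; split; last by rewrite /frob_norm big_ord0 sqrtr0.
  by split; [exact: OmA | rewrite unitmxE det_mx00 unitr1 | exists [::]].
have /det_disc_neq0_near[r r_gt0 near_A0] : det_disc A0 != 0.
  by rewrite det_disc_neq0 A0_unit; apply/separable_char_polyP.
have [B [OmB /near_A0 B_neq0]] := A0_cl r r_gt0.
set f := frob_norm (A - B); have f_ge0 : 0 <= f := frob_norm_ge0 _.
have f1_gt0 : 0 < f + 1 by rewrite ltr_wpDl.
have e'_gt0 : 0 < Num.min 1 (e / (f + 1)) by rewrite lt_min ltr01 divr_gt0.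
have [t /andP[t_gt0]] := det_disc_neq0_on_segment A B_neq0 e'_gt0.
rewrite le_min => /andP[t_le1 t_le] Z_neq0.
exists (t%:C *: B + (1 - t)%:C *: A); split.
  move: Z_neq0; rewrite det_disc_neq0 => /andP[Z_unit /separable_char_polyP Z_eigs].
  split; [|exact: Z_unit|exact: Z_eigs].
  by apply: convOm => //; rewrite (ltW t_gt0) t_le1.
have -> : (1 - t)%:C = 1 - t%:C by rewrite rmorphB rmorph1.
rewrite subr_segment frob_normZ ?ltW // -/f.
apply: le_lt_trans (ler_wpM2r f_ge0 t_le) _.
by rewrite mulrAC ltr_pdivrMr // ltr_pM2l // ltrDl ltr01.
Qed.
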